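(* Let $n\geq 3$ and $d\geq 2$ be integers, and let $c,\alpha>0$ be such that for all ${X},{Y}\in\mathbb{R}^{d\times n}$ satisfying $\|{X}\|_{1,2}\leq 1$ and $\|{Y}\|_{1,2}\leq 1$ we have $$c\, d_{\mathcal{G}_{\pm}}^\alpha({X},{Y})\leq d_{\mathcal{D}}({X},{Y}).$$ Then $\alpha\geq 2$.
   Context: A point set is a matrix ${X}\in\mathbb{R}^{d\times n}$ with columns $x_1,\dots,x_n\in\mathbb{R}^d$. The Procrustes Matching metric is $$d_{\mathcal{G}_{\pm}}({X},{Y})=\Big[\min_{(\pi,R,t)\in S_n\times O(d)\times\mathbb{R}^d}\sum_{j=1}^n\|x_j-Ry_{\pi(j)}+t\|_2^2\Big]^{1/2},$$ i.e. the Frobenius distance between ${X}$ and ${Y}$ minimized over column permutations, orthogonal transformations and translations of ${Y}$. The Hard-Gromov-Wasserstein distance is $$d_{\mathcal{D}}({X},{Y})=\min_{\pi\in S_n}\sum_{i,j=1}^n\big|\,\|x_i-x_j\|_2-\|y_{\pi(i)}-y_{\pi(j)}\|_2\,\big|.$$ $\|{X}\|_{1,2}=\max_{1\le i\le n}\|x_i\|_2$. *)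

From HB Require Import structures.
From mathcomp Require Import all_boot all_order all_algebra all_fingroup.
From mathcomp Require Import all_classical all_reals all_analysis.
Set Implicit Arguments. Unset Strict Implicit. Unset Printing Implicit Defensive.
Import Order.TTheory GRing.Theory Num.Theory.
Local Open Scope ring_scope.
Local Open Scope classical_set_scope.

Section Defs.
Variable R : realType.

Definition norm2 (d : nat) (v : 'cV[R]_d) : R :=
  Num.sqrt (\sum_(i < d) v i 0 ^+ 2).

Definition norm12 (d n : nat) (X : 'M[R]_(d, n)) : R :=
  \big[Num.max/0]_(j < n) norm2 (col j X).

Definition orthogonal_mx (d : nat) (Q : 'M[R]_d) : Prop := Q^T *m Q = 1%:M.

Definition procrustes_cost (d n : nat) (X Y : 'M[R]_(d, n))
    (pi : 'S_n) (Q : 'M[R]_d) (t : 'cV[R]_d) : R :=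
  \sum_(j < n) norm2 (col j X - Q *m col (pi j) Y + t) ^+ 2.

(* Procrustes matching metric: square root of the minimum of the cost over
   S_n x O(d) x R^d (the minimum is attained, so it is the infimum). *)
Definition d_procrustes (d n : nat) (X Y : 'M[R]_(d, n)) : R :=
  Num.sqrt (inf [set r : R | exists (pi : 'S_n) (Q : 'M[R]_d) (t : 'cV[R]_d),
                   orthogonal_mx Q /\ r = procrustes_cost X Y pi Q t]).

Definition hgw_cost (d n : nat) (X Y : 'M[R]_(d, n)) (pi : 'S_n) : R :=
  \sum_(i < n) \sum_(j < n)
     `| norm2 (col i X - col j X) - norm2 (col (pi i) Y - col (pi j) Y) |.

Definition d_hgw (d n : nat) (X Y : 'M[R]_(d, n)) : R :=
  \big[Num.min/hgw_cost X Y 1%g]_(pi : 'S_n) hgw_cost X Y pi.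

End Defs.

From HB Require Import structures.
From mathcomp Require Import all_boot all_order all_algebra all_fingroup.
From mathcomp Require Import all_classical all_reals all_analysis.
From mathcomp Require Import ring lra.
Import Order.TTheory GRing.Theory Num.Theory.
Local Open Scope ring_scope.

(* Let X have columns e_1, -e_1, 0, ..., 0 and let the "tent" Y_e move the zero columns
   to e e_2.  Corresponding pairwise distances differ by 0 or by sqrt (1 + e^2) - 1 <= e^2,
   so d_D(X, Y_e) <= n^2 e^2.  But X lies on a line, whereas Y_e contains e_1, -e_1 and
   e e_2: after any rigid motion the components of these three points orthogonal to that
   line have squared norms summing to at least e^2 / 2, so d_G(X, Y_e) >= e / 2.  Hence
   c (e / 2)^alpha <= n^2 e^2 for all small e > 0, which forces alpha >= 2. *)

Section RealInequalities.
Context {R : realType}.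

Lemma powR_le_expr_ge (c K r alpha : R) (m : nat) : 0 < c -> 0 < K -> 0 < r ->
  (forall e : R, 0 < e -> e <= r -> c * e `^ alpha <= K * e ^+ m) -> m%:R <= alpha.
Proof.
move=> c0 K0 r0 H; rewrite leNgt; apply/negP => alpha_lt_m.
set g := m%:R - alpha.
have g0 : 0 < g by rewrite subr_gt0.
have cK0 : 0 < c / (2 * K) by rewrite divr_gt0 ?mulr_gt0.
(* For [e] this small, [K e^m = e^alpha (K e^g) <= e^alpha c / 2 < c e^alpha]. *)
set e := Num.min r ((c / (2 * K)) `^ g^-1).
have e0 : 0 < e by rewrite lt_min r0 powR_gt0.
have e_g : e `^ g <= c / (2 * K).
  apply: (@le_trans _ _ (((c / (2 * K)) `^ g^-1) `^ g)).
    apply: ge0_ler_powR; rewrite ?nnegrE ?ge_min ?lexx ?orbT //.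
    - exact: ltW.
    - exact: ltW.
    - exact/ltW/powR_gt0.
  by rewrite -powRrM mulVf ?powRr1 //; [exact: ltW | exact: lt0r_neq0].
have e_m : e ^+ m = e `^ alpha * e `^ g.
  rewrite -powR_mulrn; last exact: ltW.
  rewrite -powRD; last by rewrite (gt_eqF e0) implybT.
  by rewrite /g addrC subrK.
have := H e e0; rewrite ge_min lexx e_m => /(_ isT).
have ea0 : 0 < e `^ alpha by apply: powR_gt0.
have : K * (e `^ alpha * e `^ g) <= e `^ alpha * (c / 2).
  rewrite mulrCA ler_pM2l // -ler_pdivlMl //.
  by rewrite (_ : K^-1 * (c / 2) = c / (2 * K)) //; field; rewrite gt_eqF.
nra.
Qed.

Lemma sqrt1_sub_sqrt1D_le (x : R) : 0 <= x -> `|Num.sqrt 1 - Num.sqrt (1 + x)| <= x.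
Proof.
move=> x0; rewrite sqrtr1; set s := Num.sqrt (1 + x).
have s1 : 1 <= s by rewrite -sqrtr1 ler_sqrt ?lerDl; lra.
have s2 : s ^+ 2 = 1 + x by rewrite sqr_sqrtr //; lra.
rewrite ler0_norm; nra.
Qed.

Lemma three_point_sqr_ge (e a b t : R) : e ^+ 2 <= 1 ->
  e ^+ 2 / 2 * (a ^+ 2 + b ^+ 2) <= (t - a) ^+ 2 + (t + a) ^+ 2 + (t - b * e) ^+ 2.
Proof.
move=> e1; have a2 := sqr_ge0 a; have b2 := sqr_ge0 b.
have : 0 <= (2 * t - b * e) ^+ 2 by apply: sqr_ge0.
nra.
Qed.

End RealInequalities.

Section Metrics.
Context {R : realType}.

Lemma sqr_norm2 {d} (v : 'cV[R]_d) : norm2 v ^+ 2 = \sum_i v i 0 ^+ 2.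
Proof. by rewrite sqr_sqrtr // sumr_ge0 // => i _; apply: sqr_ge0. Qed.

Lemma norm12_le {d n} (X : 'M[R]_(d, n)) r :
  0 <= r -> (forall j, norm2 (col j X) <= r) -> norm12 X <= r.
Proof. by move=> r0 H; apply: bigmax_le. Qed.

Lemma d_hgw_le_cost {d n} (X Y : 'M[R]_(d, n)) (pi : 'S_n) :
  d_hgw X Y <= hgw_cost X Y pi.
Proof. exact: bigmin_le. Qed.

Lemma procrustes_costE {d n} (X Y : 'M[R]_(d, n)) pi Q t :
  procrustes_cost X Y pi Q t =
  \sum_k \sum_j (X k j - (Q *m col (pi j) Y) k 0 + t k 0) ^+ 2.
Proof.
rewrite exchange_big; apply: eq_bigr => j _; rewrite sqr_norm2.
by apply: eq_bigr => k _; rewrite !mxE.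
Qed.

Lemma orthogonal_mx1 {d} : orthogonal_mx (1%:M : 'M[R]_d).
Proof. by rewrite /orthogonal_mx trmx1 mul1mx. Qed.

Lemma orthogonal_mx_tr {d} {Q : 'M[R]_d} : orthogonal_mx Q -> orthogonal_mx Q^T.
Proof. by rewrite /orthogonal_mx trmxK => /mulmx1C. Qed.

Lemma orthogonal_mx_col {d} {Q : 'M[R]_d} i :
  orthogonal_mx Q -> \sum_k Q k i ^+ 2 = 1.
Proof.
rewrite /orthogonal_mx => /(congr1 (fun M : 'M[R]_d => M i i)).
rewrite !mxE eqxx mulr1n => <-.
by apply: eq_bigr => k _; rewrite mxE expr2.
Qed.

Lemma orthogonal_mx_lower_cols_ge {d'} {Q : 'M[R]_d'.+2} : orthogonal_mx Q ->
  1 <= \sum_(k < d'.+1) (Q (lift ord0 k) ord0 ^+ 2 + Q (lift ord0 k) (lift ord0 ord0) ^+ 2).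
Proof.
move=> oQ; rewrite big_split /=.
have := orthogonal_mx_col ord0 oQ; have := orthogonal_mx_col (lift ord0 ord0) oQ.
rewrite !big_ord_recl.
have := orthogonal_mx_col ord0 (orthogonal_mx_tr oQ).
rewrite 2!big_ord_recl !mxE.
have : 0 <= \sum_(i < d') Q^T (lift ord0 (lift ord0 i)) ord0 ^+ 2.
  by apply: sumr_ge0 => i _; apply: sqr_ge0.
have := sqr_ge0 (Q ord0 ord0); have := sqr_ge0 (Q ord0 (lift ord0 ord0)).
lra.
Qed.

Lemma d_procrustes_ge {d n} {X Y : 'M[R]_(d, n)} {r : R} : 0 <= r ->
  (forall pi Q t, orthogonal_mx Q -> r <= procrustes_cost X Y pi Q t) ->
  Num.sqrt r <= d_procrustes X Y.
Proof.
move=> r0 H; have r_inf : r <= inf [set s : R | exists pi Q t,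
    orthogonal_mx Q /\ s = procrustes_cost X Y pi Q t].
  apply: lb_le_inf => [|s [pi [Q [t [oQ ->]]]]]; last exact: H.
  by exists (procrustes_cost X Y 1%g 1%:M 0), 1%g, 1%:M, 0; split; first exact: orthogonal_mx1.
by rewrite ler_sqrt // (le_trans r0).
Qed.

End Metrics.

Section PlanarConfigurations.
Variables (R : realType) (d' n : nat).

Definition planar_mx (u v : nat -> R) : 'M[R]_(d'.+2, n) :=
  \matrix_(k, j) if val k == 0%N then u j else if val k == 1%N then v j else 0.

Lemma norm2_supp2 (w : 'cV[R]_d'.+2) :
  (forall k : 'I_d'.+2, (2 <= k)%N -> w k 0 = 0) ->
  norm2 w = Num.sqrt (w ord0 0 ^+ 2 + w (lift ord0 ord0) 0 ^+ 2).
Proof.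
by move=> w0; rewrite /norm2 !big_ord_recl big1 ?addr0 // => k _; rewrite w0 ?expr0n.
Qed.

Lemma norm2_col_planar u v j :
  norm2 (col j (planar_mx u v)) = Num.sqrt (u j ^+ 2 + v j ^+ 2).
Proof. by rewrite norm2_supp2 ?mxE // => -[[|[|k]] ?] // _; rewrite !mxE. Qed.

Lemma norm2_col_sub_planar u v i j :
  norm2 (col i (planar_mx u v) - col j (planar_mx u v)) =
  Num.sqrt ((u i - u j) ^+ 2 + (v i - v j) ^+ 2).
Proof. by rewrite norm2_supp2 ?mxE // => -[[|[|k]] ?] // _; rewrite !mxE subrr. Qed.

Lemma mul_col_planar (Q : 'M[R]_d'.+2) u v k j :
  (Q *m col j (planar_mx u v)) k 0 = Q k ord0 * u j + Q k (lift ord0 ord0) * v j.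
Proof. by rewrite mxE !big_ord_recl big1 ?addr0 => [|l _]; rewrite !mxE ?mulr0. Qed.

End PlanarConfigurations.

Section Tent.
Variables (R : realType) (d' n : nat).

Definition tent_x (j : nat) : R := if j == 0%N then 1 else if j == 1%N then -1 else 0.
Definition tent_y (e : R) (j : nat) : R := if (2 <= j)%N then e else 0.

Definition line_cfg : 'M[R]_(d'.+2, n) := planar_mx R d' n tent_x (fun=> 0).
Definition tent_cfg e : 'M[R]_(d'.+2, n) := planar_mx R d' n tent_x (tent_y e).

Lemma tent_x_sqr_le1 j : tent_x j ^+ 2 <= 1.
Proof. by rewrite /tent_x; case: j => [|[|j]]; rewrite ?sqrrN ?expr1n ?expr0n. Qed.

Lemma tent_xy_sqr_le1 e j : e ^+ 2 <= 1 -> tent_x j ^+ 2 + tent_y e j ^+ 2 <= 1.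
Proof.
by rewrite /tent_x /tent_y; case: j => [|[|j]]; rewrite ?sqrrN ?expr1n ?expr0n ?addr0 ?add0r.
Qed.

Lemma tent_y_sub_sqr_le e i j : (tent_y e i - tent_y e j) ^+ 2 <= e ^+ 2.
Proof.
rewrite /tent_y; case: (2 <= i)%N; case: (2 <= j)%N;
  by rewrite ?subrr ?subr0 ?sub0r ?sqrrN ?expr0n ?sqr_ge0.
Qed.

Lemma tent_pair e i j : tent_y e i = tent_y e j \/ (tent_x i - tent_x j) ^+ 2 = 1.
Proof.
rewrite /tent_x /tent_y; case: i => [|[|i]]; case: j => [|[|j]] /=; try (by left);
  by right; rewrite ?subrr ?subr0 ?sub0r ?opprK ?sqrrN ?expr1n.
Qed.

Lemma norm12_line_cfg : norm12 line_cfg <= 1.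
Proof.
apply: norm12_le => // j; rewrite norm2_col_planar expr0n addr0 -sqrtr1 ler_sqrt //.
exact: tent_x_sqr_le1.
Qed.

Lemma norm12_tent_cfg e : e ^+ 2 <= 1 -> norm12 (tent_cfg e) <= 1.
Proof.
move=> e1; apply: norm12_le => // j; rewrite norm2_col_planar -sqrtr1 ler_sqrt //.
exact: tent_xy_sqr_le1.
Qed.

Lemma d_hgw_tent_le e : d_hgw line_cfg (tent_cfg e) <= n%:R ^+ 2 * e ^+ 2.
Proof.
apply: (le_trans (d_hgw_le_cost _ _ 1%g)).
apply: (@le_trans _ _ (\sum_(i < n) \sum_(j < n) e ^+ 2)).
  apply: ler_sum => i _; apply: ler_sum => j _.
  rewrite !perm1 !norm2_col_sub_planar subrr expr0n addr0.
  have [-> | x1] := tent_pair e i j.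
    by rewrite subrr expr0n addr0 subrr normr0 sqr_ge0.
  rewrite x1; apply: le_trans (tent_y_sub_sqr_le e i j).
  exact/sqrt1_sub_sqrt1D_le/sqr_ge0.
by rewrite !sumr_const !card_ord -mulrnA -[leLHS]mulr_natr natrM mulrC -expr2.
Qed.

End Tent.

Section TentProcrustes.
Variables (R : realType) (d' n' : nat).
Local Notation X := (line_cfg R d' n'.+3).
Local Notation Y := (tent_cfg R d' n'.+3).

Lemma tent_row_ge e (pi : 'S_n'.+3) (Q : 'M[R]_d'.+2) (t : 'cV[R]_d'.+2) k :
  let l := lift ord0 k in e ^+ 2 <= 1 ->
  e ^+ 2 / 2 * (Q l ord0 ^+ 2 + Q l (lift ord0 ord0) ^+ 2) <=
  \sum_j (X l j - (Q *m col (pi j) (Y e)) l 0 + t l 0) ^+ 2.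
Proof.
move=> l e1; pose h (m : 'I_n'.+3) :=
  (t l 0 - (Q l ord0 * tent_x R m + Q l (lift ord0 ord0) * tent_y R e m)) ^+ 2.
have -> : \sum_j (X l j - (Q *m col (pi j) (Y e)) l 0 + t l 0) ^+ 2 = \sum_j h (pi j).
  by apply: eq_bigr => j _; rewrite /h mul_col_planar mxE /= if_same sub0r addrC.
rewrite -(reindex_inj (@perm_inj _ pi) (P := xpredT) (F := h)) 3!big_ord_recl /= !addrA.
rewrite -[leLHS]addr0 lerD ?sumr_ge0 // => [|i _]; last exact: sqr_ge0.
have -> : h ord0 + h (lift ord0 ord0) + h (lift ord0 (lift ord0 ord0)) =
    (t l 0 - Q l ord0) ^+ 2 + (t l 0 + Q l ord0) ^+ 2 +
    (t l 0 - Q l (lift ord0 ord0) * e) ^+ 2.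
  by rewrite /h /tent_x /tent_y /=; ring.
exact: three_point_sqr_ge.
Qed.

Lemma procrustes_cost_tent_ge e pi Q t : e ^+ 2 <= 1 -> orthogonal_mx Q ->
  e ^+ 2 / 2 <= procrustes_cost X (Y e) pi Q t.
Proof.
(* Row [0] is dropped; in the others [X] vanishes. *)
move=> e1 oQ; rewrite procrustes_costE big_ord_recl /= addrC.
rewrite -[leLHS]addr0 lerD ?sumr_ge0 // => [|j _]; last exact: sqr_ge0.
apply: le_trans (ler_sum _ (fun k _ => tent_row_ge e pi Q t k e1)).
rewrite -mulr_sumr -[leLHS]mulr1 ler_wpM2l ?orthogonal_mx_lower_cols_ge //.
by rewrite divr_ge0 ?sqr_ge0.
Qed.

Lemma d_procrustes_tent_ge e : 0 <= e -> e <= 1 -> e / 2 <= d_procrustes X (Y e).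
Proof.
move=> e0 e1; have e21 : e ^+ 2 <= 1 by rewrite -[1](expr1n _ 2) lerXn2r ?nnegrE.
have r0 : 0 <= e ^+ 2 / 2 by rewrite divr_ge0 ?sqr_ge0.
apply: le_trans (d_procrustes_ge r0 (fun pi Q t => procrustes_cost_tent_ge e pi Q t e21)).
by rewrite -(ger0_norm (divr_ge0 e0 _)) // -sqrtr_sqr ler_sqrt; nra.
Qed.

End TentProcrustes.

Theorem theorem2 (R : realType) (n d : nat) (c alpha : R) :
  (3 <= n)%N -> (2 <= d)%N -> 0 < c -> 0 < alpha ->
  (forall X Y : 'M[R]_(d, n), norm12 X <= 1 -> norm12 Y <= 1 ->
     c * (d_procrustes X Y `^ alpha) <= d_hgw X Y) ->
  2 <= alpha.
Proof.
move=> n3 d2 c0 a0; case: n n3 => [|[|[|n']]] // _; case: d d2 => [|[|d']] // _ H.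
have K0 : 0 < 4 * n'.+3%:R ^+ 2 :> R by rewrite mulr_gt0 ?exprn_gt0 ?ltr0n.
apply: (@powR_le_expr_ge _ c _ (1 / 2) alpha 2 c0 K0) => // s s0 s_le.
have e0 : 0 <= 2 * s by lra.
have e1 : 2 * s <= 1 by lra.
have e21 : (2 * s) ^+ 2 <= 1 by nra.
set X := line_cfg R d' n'.+3; set Y := tent_cfg R d' n'.+3 (2 * s).
have s_dproc : s <= d_procrustes X Y.
  by apply: le_trans (d_procrustes_tent_ge R d' n' _ e0 e1); lra.
apply: (@le_trans _ _ (c * d_procrustes X Y `^ alpha)).
  rewrite ler_pM2l // ge0_ler_powR ?nnegrE ?(ltW a0) ?(ltW s0) //.
  exact: le_trans (ltW s0) s_dproc.
apply: le_trans (H _ _ (norm12_line_cfg R d' n'.+3) (norm12_tent_cfg R d' n'.+3 _ e21)) _.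
by apply: le_trans (d_hgw_tent_le R d' n'.+3 _) _; lra.
Qed.
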